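(* Let $M=[a_{ij},b_{ij}]_{i,j\in\{1,2\}}$ and $\widehat M=[\hat a_{ij},\hat b_{ij}]_{i,j\in\{1,2\}}$ be $2\times2$ 2-person normal form game matrices and put $c_{ij}=\hat a_{ij}-a_{ij}$. Then $\widehat M$ can be obtained from $M$ by an OI-transformation if and only if $a_{ij}+b_{ij}=\hat a_{ij}+\hat b_{ij}$ for all $i,j\in\{1,2\}$ and $c_{11}+c_{22}=c_{12}+c_{21}$.
   Context: A 2-person normal form game matrix of dimensions $n\times m$ is $M=[a_{ij},b_{ij}]_{i\le n,\,j\le m}$, where $(a_{ij},b_{ij})\in\mathbb{R}^2$ are the payoffs of the row player $A$ and column player $B$ when $A$ plays strategy $A_i$ and $B$ plays $B_j$. A preplay offer by $A$ to $B$ of amount $\delta\ge 0$ contingent on $B_j$ replaces $(a_{ij},b_{ij})$ by $(a_{ij}-\delta,b_{ij}+\delta)$ for every $i$ (other entries unchanged); a preplay offer by $B$ to $A$ of amount $\delta\ge0$ contingent on $A_i$ replaces $(a_{ij},b_{ij})$ by $(a_{ij}+\delta,b_{ij}-\delta)$ for every $j$. Each such map is a POI-transformation; an OI-transformation is a composition of finitely many POI-transformations (all amounts non-negative). *)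

From HB Require Import structures.
From mathcomp Require Import all_boot all_order all_algebra.
Set Implicit Arguments. Unset Strict Implicit. Unset Printing Implicit Defensive.
Import Order.TTheory GRing.Theory Num.Theory.
Local Open Scope ring_scope.

(* An n x m 2-person normal form game matrix: entry (i,j) is the pair
   (a_ij, b_ij) of payoffs of the row player A and column player B. *)
Definition game (R : Type) (n m : nat) := 'I_n -> 'I_m -> R * R.

(* Preplay offer by A to B of amount d contingent on B_j. *)
Definition offerA (R : numDomainType) n m (j : 'I_m) (d : R) (M : game R n m)
  : game R n m :=
  fun i' j' => if j' == j then ((M i' j').1 - d, (M i' j').2 + d) else M i' j'.

(* Preplay offer by B to A of amount d contingent on A_i. *)
Definition offerB (R : numDomainType) n m (i : 'I_n) (d : R) (M : game R n m)
  : game R n m :=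
  fun i' j' => if i' == i then ((M i' j').1 + d, (M i' j').2 - d) else M i' j'.

Inductive POI (R : numDomainType) n m : game R n m -> game R n m -> Prop :=
  | POI_A (j : 'I_m) (d : R) (M : game R n m) : 0 <= d -> POI M (offerA j d M)
  | POI_B (i : 'I_n) (d : R) (M : game R n m) : 0 <= d -> POI M (offerB i d M).

Inductive OI (R : numDomainType) n m (M : game R n m) : game R n m -> Prop :=
  | OI_refl : OI M M
  | OI_step (M1 M2 : game R n m) : OI M M1 -> POI M1 M2 -> OI M M2.

From HB Require Import structures.
From mathcomp Require Import all_boot all_order all_algebra.
From mathcomp Require Import ring lra.
From Stdlib Require Import FunctionalExtensionality.
Set Implicit Arguments. Unset Strict Implicit. Unset Printing Implicit Defensive.
Import Order.TTheory GRing.Theory Num.Theory.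
Local Open Scope ring_scope.

(* A preplay offer moves money between the players, so it preserves every
   total payoff a_ij + b_ij; it also shifts the row player's payoffs of a
   whole column (or a whole row) by a constant, so it preserves every
   "interaction" a_ij - a_ij' - a_i'j + a_i'j'.  Both facts hold for games of
   any size, and any quantity preserved by single POI-transformations is
   preserved by OI-transformations; this gives necessity.

   Conversely, performing offers of amounts v_j >= 0 on every column and then
   u_i >= 0 on every row changes entry (i,j) by (u_i - v_j, v_j - u_i).  So any
   M^ whose payoff changes have the additive form c_ij = u_i - v_j with
   u, v >= 0 is OI-reachable.  For 2x2 games, c_11 + c_22 = c_12 + c_21 is
   exactly the condition for such a nonnegative decomposition to exist. *)

Section Games.

Variables (R : numDomainType) (n m : nat).
Implicit Types (M N : game R n m).

Definition total_payoff M i j : R := (M i j).1 + (M i j).2.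

Definition interaction M (i i' : 'I_n) (j j' : 'I_m) : R :=
  (M i j).1 - (M i j').1 - (M i' j).1 + (M i' j').1.

Lemma OI_invariant (T : Type) (f : game R n m -> T) :
  (forall M N, POI M N -> f M = f N) -> forall M N, OI M N -> f M = f N.
Proof. by move=> fPOI M N; elim=> // N1 N2 _ -> /fPOI. Qed.

(* Each offer adds d to one player's payoff and removes it from the other's. *)
Lemma POI_total_payoff i j M N :
  POI M N -> total_payoff M i j = total_payoff N i j.
Proof.
rewrite /total_payoff.
by case=> [j0 d|i0 d] {}M _; rewrite /offerA /offerB; case: ifP => //= _; ring.
Qed.

(* An offer shifts the row player's payoffs of a whole column (or row) by the
   same amount, and such shifts cancel in an interaction. *)
Lemma POI_interaction i i' j j' M N :
  POI M N -> interaction M i i' j j' = interaction N i i' j j'.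
Proof.
rewrite /interaction.
case=> [j0 d|i0 d] {}M _; rewrite /offerA /offerB.
- by case: (j == j0); case: (j' == j0) => /=; ring.
- by case: (i == i0); case: (i' == i0) => /=; ring.
Qed.

Definition column_offers (v : 'I_m -> R) (s : seq 'I_m) M : game R n m :=
  foldr (fun j => offerA j (v j)) M s.

Definition row_offers (u : 'I_n -> R) (s : seq 'I_n) M : game R n m :=
  foldr (fun i => offerB i (u i)) M s.

Lemma column_offers_entry v s M i j :
  column_offers v s M i j =
  ((M i j).1 - \sum_(k <- s | k == j) v k, (M i j).2 + \sum_(k <- s | k == j) v k).
Proof.
elim: s => [|k s IH]; first by rewrite big_nil subr0 addr0 -surjective_pairing.
rewrite big_cons /= {1}/offerA IH eq_sym.
by case: (k == j) => /=; congr (_, _); ring.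
Qed.

Lemma row_offers_entry u s M i j :
  row_offers u s M i j =
  ((M i j).1 + \sum_(k <- s | k == i) u k, (M i j).2 - \sum_(k <- s | k == i) u k).
Proof.
elim: s => [|k s IH]; first by rewrite big_nil subr0 addr0 -surjective_pairing.
rewrite big_cons /= {1}/offerB IH eq_sym.
by case: (k == i) => /=; congr (_, _); ring.
Qed.

Lemma sum_enum_pred1 p (w : 'I_p -> R) k :
  \sum_(l <- enum 'I_p | l == k) w l = w k.
Proof. by rewrite big_enum_cond /= big_pred1_eq. Qed.

Lemma OI_column_offers v s M N :
  (forall j, 0 <= v j) -> OI M N -> OI M (column_offers v s N).
Proof.
by move=> v_ge0 MN; elim: s => //= j s IH; exact: OI_step IH (POI_A _ _ (v_ge0 j)).
Qed.

Lemma OI_row_offers u s M N :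
  (forall i, 0 <= u i) -> OI M N -> OI M (row_offers u s N).
Proof.
by move=> u_ge0 MN; elim: s => //= i s IH; exact: OI_step IH (POI_B _ _ (u_ge0 i)).
Qed.

Lemma OI_additive_shift (u : 'I_n -> R) (v : 'I_m -> R) M N :
  (forall i, 0 <= u i) -> (forall j, 0 <= v j) ->
  (forall i j, N i j = ((M i j).1 + (u i - v j), (M i j).2 - (u i - v j))) ->
  OI M N.
Proof.
move=> u_ge0 v_ge0 NE.
have -> : N = row_offers u (enum 'I_n) (column_offers v (enum 'I_m) M).
  apply: functional_extensionality => i; apply: functional_extensionality => j.
  rewrite NE row_offers_entry column_offers_entry /= !sum_enum_pred1.
  by congr (_, _); ring.
exact/OI_row_offers/OI_column_offers/OI_refl.
Qed.

End Games.

Lemma ord2_cases (i : 'I_2) : i = ord0 \/ i = ord_max.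
Proof. by case: i => [[|[|k]] Hk] //; [left|right]; apply/val_inj. Qed.

(* A 2x2 array with equal diagonal and antidiagonal sums splits as
   c i j = u i - v j with u, v nonnegative: shift u i = c i 0 and
   v j = c 0 0 - c 0 j by a common large enough t. *)
Lemma additive_decomposition_2x2 (R : realFieldType) (c : 'I_2 -> 'I_2 -> R) :
  c ord0 ord0 + c ord_max ord_max = c ord0 ord_max + c ord_max ord0 ->
  exists (u v : 'I_2 -> R), [/\ forall i, 0 <= u i, forall j, 0 <= v j
                              & forall i j, c i j = u i - v j].
Proof.
move=> cE; set t := `|c ord0 ord0| + `|c ord0 ord_max| + `|c ord_max ord0|.
have bounds (x : R) : 0 <= `|x| /\ - `|x| <= x <= `|x|.
  by rewrite normr_ge0 -ler_norml.
have [n00 /andP[l00 r00]] := bounds (c ord0 ord0).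
have [n01 /andP[l01 r01]] := bounds (c ord0 ord_max).
have [n10 /andP[l10 r10]] := bounds (c ord_max ord0).
exists (fun i => t + c i ord0), (fun j => t + c ord0 ord0 - c ord0 j); split.
- by move=> i; case: (ord2_cases i) => ->; rewrite /t; lra.
- by move=> j; case: (ord2_cases j) => ->; rewrite /t; lra.
- by move=> i j; case: (ord2_cases i) => ->; case: (ord2_cases j) => ->; lra.
Qed.

Theorem corollary1 (R : realFieldType) (M Mh : game R 2 2) :
  OI M Mh <->
  ((forall i j : 'I_2, (M i j).1 + (M i j).2 = (Mh i j).1 + (Mh i j).2) /\
   (let c := fun i j : 'I_2 => (Mh i j).1 - (M i j).1 in
    c ord0 ord0 + c ord_max ord_max = c ord0 ord_max + c ord_max ord0)).
Proof.
split=> [MMh | [totalE cE]].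
- split=> [i j | /=].
    exact: (OI_invariant (f := fun N => total_payoff N i j)
                         (POI_total_payoff i j) MMh).
  have := OI_invariant (f := fun N => interaction N ord0 ord_max ord0 ord_max)
                (POI_interaction ord0 ord_max ord0 ord_max) MMh.
  by rewrite /interaction; lra.
- have [u [v [u_ge0 v_ge0 uvE]]] :=
    additive_decomposition_2x2 (c := fun i j => (Mh i j).1 - (M i j).1) cE.
  apply: (OI_additive_shift u_ge0 v_ge0) => i j.
  have := totalE i j; rewrite -uvE [Mh i j]surjective_pairing /=.
  by move=> ?; congr (_, _); lra.
Qed.
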